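(* Under the setup below, fix $K=(k_1,\dots,k_r)$ and two distinct ordered tuples $L,L'$ of $r$ distinct target indices in $[d]$. Let $M_{L,L'}(y)$ be the $\binom{2r-1}{r}\times2$ matrix whose rows are indexed by all $\alpha\in\mathbb N^r$ with $|\alpha|=r$ and whose row $\alpha$ is $(D_{\alpha,L}(y),D_{\alpha,L'}(y))$. Then all $2\times2$ minors of $M_{L,L'}(y)$ are homogeneous polynomials of degree $2r$ vanishing on the attention variety.
   Context: Setup: $d'=1$, $t>1$, $Q,K\in\mathbb R^{a\times d}$, $V\in\mathbb R^{1\times d}$ with row $v$, $A=K^\top Q$, $\varphi_W(X)=VX(X^\top AX)$, $X=(x_{kn})\in\mathbb R^{d\times t}$; fix $j\in[t]$, $n\ne j$, and $2\le r\le\min(a,d)$; $k_1,\dots,k_r$ are distinct elements of $[d]$. $y_{n,j}(\mathcal A,b)$ denotes the coefficient of $(\prod_{u\in\mathcal A}x_{un})x_{bj}$ in $\varphi_W(X)[1,j]$ divided by the number of distinct orderings of the size-2 multiset $\mathcal A$; $\omega(u,w)=1$ if $u=w$, $2$ otherwise. For $\alpha\in\mathbb N^r$ with $|\alpha|=r$, choose $f:[r]\to[r]$ with $|f^{-1}(m)|=\alpha_m$ whose only directed cycles are fixed points, and for a tuple $L=(l_1,\dots,l_r)$ of distinct indices set $D_{\alpha,L}(y)=\det\big(\omega(k_{f(p)},k_p)\,y_{n,j}(\{k_{f(p)},k_p\},l_q)\big)_{p,q=1}^r$; on $\mu(W)$ this equals $(\prod_m v_{k_m}^{\alpha_m})\det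 A_{K,L}$. $\mu$ maps $W$ to all scaled coefficients; the attention variety is the Zariski closure of $\operatorname{im}\mu$. *)

From HB Require Import structures.
From mathcomp Require Import all_boot all_order all_algebra.
From mathcomp Require Import reals.
From mathcomp Require Import mpoly.

Set Implicit Arguments.
Unset Strict Implicit.
Unset Printing Implicit Defensive.

Import GRing.Theory.
Local Open Scope ring_scope.

Section Attention.
Variables (R : realType) (a d t : nat).

Definition NX := #|{: 'I_d * 'I_t}|.

Definition xidx (k : 'I_d) (n : 'I_t) : 'I_NX := enum_rank (k, n).

Definition Xmat : 'M[{mpoly R[NX]}]_(d, t) := \matrix_(k, n) 'X_(xidx k n).

Definition phiW (Q Kk : 'M[R]_(a, d)) (V : 'M[R]_(1, d)) : 'M[{mpoly R[NX]}]_(1, t) :=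
  let A := map_mx (@mpolyC NX R) (Kk^T *m Q) in
  map_mx (@mpolyC NX R) V *m Xmat *m (Xmat^T *m A *m Xmat).

(* number of distinct orderings of the size-2 multiset {k, u} *)
Definition norderings (k u : 'I_d) : nat := if k == u then 1%N else 2%N.

Definition ycoef (Q Kk : 'M[R]_(a, d)) (V : 'M[R]_(1, d))
    (n j : 'I_t) (k u b : 'I_d) : R :=
  (phiW Q Kk V ord0 j)@_(U_(xidx k n) + U_(xidx u n) + U_(xidx b j))%MM
    / (norderings k u)%:R.

(* Coordinates of the ambient space: y_{n,j}({k,u}, b) with n <> j; the
   multiset {k,u} is represented by the sorted pair (k <= u). *)
Definition ycoord := {c : 'I_t * 'I_t * 'I_d * 'I_d * 'I_d |
   (c.1.1.1.1 != c.1.1.1.2) && (c.1.1.2 <= c.1.2)%N}.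

Definition NY := #|{: ycoord}|.

Definition mu (Q Kk : 'M[R]_(a, d)) (V : 'M[R]_(1, d)) : 'I_NY -> R :=
  fun i => let c := val (enum_val i) in
           ycoef Q Kk V c.1.1.1.1 c.1.1.1.2 c.1.1.2 c.1.2 c.2.

(* The attention variety: Zariski closure of the image of mu. *)
Definition attention_variety (y : 'I_NY -> R) : Prop :=
  forall p : {mpoly R[NY]},
    (forall (Q Kk : 'M[R]_(a, d)) (V : 'M[R]_(1, d)), p.@[mu Q Kk V] = 0) ->
    p.@[y] = 0.

Definition yvar (n j : 'I_t) (k u b : 'I_d) : {mpoly R[NY]} :=
  match (insub (n, j, if (k <= u)%N then k else u,
                       if (k <= u)%N then u else k, b) : option ycoord) with
  | Some c => 'X_(enum_rank c)
  | None => 0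
  end.

Definition omega (u w : 'I_d) : nat := if u == w then 1%N else 2%N.

(* D_{alpha,L}(y) for the chosen f (alpha enters through f) *)
Definition Dpoly (n j : 'I_t) (r : nat) (kk L : r.-tuple 'I_d)
    (f : 'I_r -> 'I_r) : {mpoly R[NY]} :=
  \det (\matrix_(p < r, q < r)
          ((omega (tnth kk (f p)) (tnth kk p))%:R *
           yvar n j (tnth kk (f p)) (tnth kk p) (tnth L q))).

End Attention.

(* f : [r] -> [r] with |f^{-1}(m)| = alpha_m whose only directed cycles
   (in the functional graph p -> f p) are fixed points *)
Definition admissible_f (r : nat) (alpha : {ffun 'I_r -> nat}) (f : 'I_r -> 'I_r) : Prop :=
  (forall m : 'I_r, #|[pred p | f p == m]| = alpha m) /\
  (forall (p : 'I_r) (k : nat), (0 < k)%N -> iter k f p = p -> f p = p).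

From HB Require Import structures.
From mathcomp Require Import all_boot all_order all_algebra.
From mathcomp Require Import reals.
From mathcomp Require Import mpoly.
From mathcomp Require Import perm zify ring.

(* Writing A = K^T Q, the coordinate y_{n,j}({k,u}, b) of mu(Q, K, V) is
   (v_k A_{u b} + v_u A_{k b}) / omega(k, u) (just v_k A_{k b} when k = u).
   Hence the matrix defining D_{f,L} at mu(W) factors as B_f * A_{K,L}, where
   row p of B_f only involves v and the indices p and f(p), so
   D_{f,L}(mu W) = det B_f * det A_{K,L}.  The two columns of M_{L,L'} at
   mu(W) are therefore proportional to each other, and the 2x2 minors vanish
   on the image of mu, hence on its Zariski closure.  This uses no property
   of f, L or L'; homogeneity holds because D_{f,L} is an r x r determinant of
   linear forms. *)

Set Implicit Arguments.
Unset Strict Implicit.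
Unset Printing Implicit Defensive.
Import GRing.Theory Num.Theory.
Local Open Scope ring_scope.

Lemma dhomog_prod1 (R : nzRingType) N (I : Type) (s : seq I) (F : I -> {mpoly R[N]}) :
  (forall i, F i \is 1.-homog) -> \prod_(i <- s) F i \is (size s).-homog.
Proof.
move=> homF; elim: s => [|x s IHs]; first by rewrite big_nil dhomog1.
by rewrite big_cons /= -add1n; apply: dhomogM.
Qed.

Lemma det_dhomog (R : comNzRingType) N r (M : 'M[{mpoly R[N]}]_r) :
  (forall p q, M p q \is 1.-homog) -> \det M \is r.-homog.
Proof.
move=> homM; apply: rpred_sum => s _.
have homP : \prod_i M i (s i) \is r.-homog.
  by rewrite -[X in X.-homog]card_ord cardE -big_enum; apply: dhomog_prod1.
by case: odd_perm; rewrite ?expr1 ?expr0 ?mulN1r ?mul1r ?rpredN.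
Qed.

Lemma yvar_homog (R : realType) d t (n j : 'I_t) (k u b : 'I_d) :
  yvar R n j k u b \is 1.-homog.
Proof.
rewrite /yvar; case: insub => [c|]; last exact: rpred0.
by rewrite dhomogX; apply/eqP; apply: mdeg1.
Qed.

Lemma Dpoly_homog (R : realType) d t (n j : 'I_t) r (kk L : r.-tuple 'I_d) f :
  Dpoly R n j kk L f \is r.-homog.
Proof.
apply: det_dhomog => p q; rewrite mxE mulr_natl.
exact/rpredMn/yvar_homog.
Qed.

Lemma sum_indicator (R : nzSemiRingType) (I : finType) (F : I -> R) (i : I) :
  \sum_j F j * (j == i)%:R = F i.
Proof. by rewrite (big_only1 i) ?eqxx ?mulr1 // => j /negbTE-> _; rewrite mulr0. Qed.

Lemma sum_unordered_pair (R : nzSemiRingType) (I : finType) (F : I -> I -> R) (k u : I) :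
  \sum_k' \sum_u' F k' u' * (((k' == k) && (u' == u)) || ((k' == u) && (u' == k)))%:R
  = if k == u then F k k else F k u + F u k.
Proof.
have vanish k' : k' != k -> k' != u ->
    \sum_u' F k' u' * (((k' == k) && (u' == u)) || ((k' == u) && (u' == k)))%:R = 0.
  by move=> /negbTE k'k /negbTE k'u; rewrite big1 // => u' _; rewrite k'k k'u mulr0.
case: eqVneq => [ku|ku].
  subst u; rewrite (big_only1 k) // => [|k' k'k _]; last exact: vanish.
  by rewrite -(sum_indicator (F k) k); apply: eq_bigr => u' _; rewrite eqxx orbb.
rewrite (bigD1 k) // (bigD1 u) 1?eq_sym //= [X in _ + (_ + X)]big1; last first.
  by move=> k' /andP[k'u k'k]; apply: vanish.
rewrite addr0 -(sum_indicator (F k) u) -(sum_indicator (F u) k).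
congr (_ + _); apply: eq_bigr => u' _.
  by rewrite eqxx (eq_sym u k) (negbTE ku) orbF.
by rewrite eqxx (eq_sym u k) (negbTE ku).
Qed.

Lemma mnm1D_eq_pair N (x y z w : 'I_N) :
  (U_(x) + U_(y) = U_(z) + U_(w))%MM -> (x == z) && (y == w) || (x == w) && (y == z).
Proof.
move=> E; have {E}C i : ((x == i) + (y == i) = (z == i) + (w == i))%N.
  by have := congr1 (fun m : 'X_{1..N} => m i) E; rewrite /= !mnmDE !mnm1E.
case: (eqVneq x z) => [xz|xz].
  subst z; have := C y; rewrite eqxx eq_sym.
  by case: (x == y); case: (eqVneq w y) => //= _; lia.
case: (eqVneq x w) => [xw|xw]; last first.
  by have := C x; rewrite eqxx ![_ == x]eq_sym (negbTE xz) (negbTE xw); case: (x == y).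
subst w; have := C y; rewrite eqxx [x == y]eq_sym.
by case: (y == x); case: (eqVneq z y) => /= _; lia.
Qed.

Lemma xidx_eq d t (k k' : 'I_d) (m m' : 'I_t) :
  (xidx k m == xidx k' m') = (k == k') && (m == m').
Proof. by rewrite /xidx (inj_eq enum_rank_inj) xpair_eqE. Qed.

Definition ymonom d t (n j : 'I_t) (k u b : 'I_d) : 'X_{1..NX d t} :=
  (U_(xidx k n) + U_(xidx u n) + U_(xidx b j))%MM.

Lemma ymonom_eq d t (n j m : 'I_t) (k' u' b' k u b : 'I_d) : n != j ->
  (ymonom m j k' u' b' == ymonom n j k u b) =
  [&& m == n, b' == b & ((k' == k) && (u' == u)) || ((k' == u) && (u' == k))].
Proof.
move=> nj; apply/eqP/idP => [E|]; last first.
  case/and3P => /eqP-> /eqP-> /orP[/andP[/eqP-> /eqP->]|/andP[/eqP-> /eqP->]] //.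
  by rewrite /ymonom [(U_(_) + U_(xidx k n))%MM]addmC.
have C i : ((xidx k' m == i) + (xidx u' m == i) + (xidx b' j == i) =
            (xidx k n == i) + (xidx u n == i) + (xidx b j == i))%N.
  by have := congr1 (fun mm : 'X_{1..NX d t} => mm i) E; rewrite /= !mnmDE !mnm1E.
have bb : b' == b.
  have := C (xidx b' j); rewrite !xidx_eq !eqxx (negbTE nj) !andbF !andbT.
  by rewrite [b == _]eq_sym; case: (b' == b) => //=; lia.
have mn : m == n.
  have := C (xidx k n); rewrite !xidx_eq !eqxx (eq_sym j) (negbTE nj) !andbF !andbT.
  by case: (m == n); rewrite ?andbF //=; lia.
rewrite mn bb /=; move/eqP: bb E => ->; move/eqP: mn => -> /addIm /mnm1D_eq_pair.
by rewrite !xidx_eq !eqxx !andbT.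
Qed.

Lemma phiW_expand (R : realType) a d t (Q Kk : 'M[R]_(a, d)) (V : 'M[R]_(1, d))
    (j : 'I_t) :
  phiW t Q Kk V ord0 j = \sum_(m < t) \sum_(k' < d) \sum_(u' < d) \sum_(b' < d)
    (V ord0 k' * (Kk^T *m Q) u' b')%:MP * 'X_[ymonom m j k' u' b'].
Proof.
rewrite /phiW !mxE; apply: eq_bigr => m _; rewrite !mxE big_distrl /=.
apply: eq_bigr => k' _; rewrite big_distrr /=.
under eq_bigr do rewrite !mxE big_distrl big_distrr /=.
rewrite exchange_big /=; apply: eq_bigr => u' _; apply: eq_bigr => b' _.
rewrite /Xmat !mxE !mpolyXD rmorphM /=; ring.
Qed.

Lemma mcoeff_phiW (R : realType) a d t (Q Kk : 'M[R]_(a, d)) (V : 'M[R]_(1, d))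
    (n j : 'I_t) (k u b : 'I_d) : n != j ->
  (phiW t Q Kk V ord0 j)@_(ymonom n j k u b) = \sum_(k' < d) \sum_(u' < d)
    V ord0 k' * (Kk^T *m Q) u' b *
    (((k' == k) && (u' == u)) || ((k' == u) && (u' == k)))%:R.
Proof.
move=> nj; set c := fun k' u' b' => V ord0 k' * (Kk^T *m Q) u' b'.
have termE m k' u' b' : ((c k' u' b')%:MP * 'X_[ymonom m j k' u' b'])@_(ymonom n j k u b) =
    c k' u' b' * [&& m == n, b' == b & ((k' == k) && (u' == u)) || ((k' == u) && (u' == k))]%:R.
  by rewrite mcoeffCM mcoeffX ymonom_eq.
rewrite phiW_expand raddf_sum (big_only1 n) // => [|m /negbTE mn _].
  rewrite raddf_sum; apply: eq_bigr => k' _; rewrite raddf_sum; apply: eq_bigr => u' _.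
  rewrite raddf_sum (big_only1 b) // => [|b' /negbTE bb _].
    by apply: etrans (termE _ _ _ _) _; rewrite !eqxx.
  by apply: etrans (termE _ _ _ _) _; rewrite bb andbF mulr0.
rewrite !raddf_sum big1 // => k' _; rewrite raddf_sum big1 // => u' _.
by rewrite raddf_sum big1 // => b' _; apply: etrans (termE _ _ _ _) _; rewrite mn mulr0.
Qed.

(* omega(k, u) * y_{n,j}({k,u}, b) at mu(Q, K, V), for v = V and A = K^T Q *)
Definition sym_coef (R : nzRingType) d (v : 'rV[R]_d) (A : 'M[R]_d) (k u b : 'I_d) : R :=
  if k == u then v ord0 k * A k b else v ord0 k * A u b + v ord0 u * A k b.

Lemma sym_coefC (R : nzRingType) d (v : 'rV[R]_d) (A : 'M[R]_d) (k u b : 'I_d) :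
  sym_coef v A k u b = sym_coef v A u k b.
Proof. by rewrite /sym_coef eq_sym; case: eqVneq => [->|_] //; rewrite addrC. Qed.

Lemma yvar_mu (R : realType) a d t (Q Kk : 'M[R]_(a, d)) (V : 'M[R]_(1, d))
    (n j : 'I_t) (k u b : 'I_d) : n != j ->
  (yvar R n j k u b).@[mu Q Kk V] = sym_coef V (Kk^T *m Q) k u b / (norderings k u)%:R.
Proof.
move=> nj; rewrite /yvar; case: insubP => [c _ cE|]; last first.
  by rewrite /= nj /=; case: (leqP k u) => [ku|/ltnW ku]; rewrite ku.
rewrite mevalXU /mu enum_rankK cE /= /ycoef mcoeff_phiW // sum_unordered_pair.
by case: leqP => // _; rewrite sym_coefC /sym_coef /norderings [k == u]eq_sym.
Qed.

Definition Dcoef_mx (R : nzRingType) d (v : 'rV[R]_d) r (kk : r.-tuple 'I_d)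
    (f : 'I_r -> 'I_r) : 'M[R]_r :=
  \matrix_(p, s) (v ord0 (tnth kk (f p)) * (s == p)%:R +
     (if tnth kk (f p) == tnth kk p then 0 else v ord0 (tnth kk p) * (s == f p)%:R)).

Lemma sym_coef_Dcoef (R : comNzRingType) d (v : 'rV[R]_d) (A : 'M[R]_d) r
    (kk L : r.-tuple 'I_d) (f : 'I_r -> 'I_r) p q :
  sym_coef v A (tnth kk (f p)) (tnth kk p) (tnth L q) =
  (Dcoef_mx v kk f *m mxsub (tnth kk) (tnth L) A) p q.
Proof.
rewrite !mxE; under eq_bigr do rewrite !mxE mulrDl mulrAC.
rewrite big_split /= sum_indicator /sym_coef; case: eqP => [->|_].
  by rewrite big1 ?addr0 // => s _; rewrite !mul0r.
by under eq_bigr do rewrite mulrAC; rewrite sum_indicator.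
Qed.

Lemma Dpoly_mu (R : realType) a d t (Q Kk : 'M[R]_(a, d)) (V : 'M[R]_(1, d))
    (n j : 'I_t) r (kk L : r.-tuple 'I_d) (f : 'I_r -> 'I_r) : n != j ->
  (Dpoly R n j kk L f).@[mu Q Kk V] =
  \det (Dcoef_mx V kk f) * \det (mxsub (tnth kk) (tnth L) (Kk^T *m Q)).
Proof.
move=> nj; rewrite /Dpoly -(det_map_mx (meval (mu Q Kk V))) -det_mulmx.
congr (\det _); apply/matrixP => p q; rewrite -sym_coef_Dcoef !mxE.
rewrite rmorphM rmorph_nat /= yvar_mu // mulrC divfK //.
by rewrite pnatr_eq0 /norderings; case: ifP.
Qed.

Theorem mainTheorem13 (R : realType) (a d t : nat) (j n : 'I_t) (r : nat)
    (kk L L' : r.-tuple 'I_d) :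
  (1 < t)%N -> n != j -> (2 <= r)%N -> (r <= minn a d)%N ->
  uniq kk -> uniq L -> uniq L' -> L != L' ->
  forall (alpha beta : {ffun 'I_r -> nat}) (fa fb : 'I_r -> 'I_r),
    (\sum_(i < r) alpha i)%N = r -> (\sum_(i < r) beta i)%N = r ->
    alpha != beta ->
    admissible_f alpha fa -> admissible_f beta fb ->
    let minor := Dpoly R n j kk L fa * Dpoly R n j kk L' fb
               - Dpoly R n j kk L fb * Dpoly R n j kk L' fa in
    minor \is (2 * r)%N.-homog /\
    (forall y : 'I_(NY d t) -> R, @attention_variety R a d t y -> minor.@[y] = 0).
Proof.
move=> _ nj _ _ _ _ _ _ alpha beta fa fb _ _ _ _ _ minor; split.
  by rewrite mul2n -addnn; apply: rpredB; apply: dhomogM; apply: Dpoly_homog.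
move=> y in_variety; apply: in_variety => Q Kk V.
by rewrite mevalB !mevalM !Dpoly_mu //; ring.
Qed.
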